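(* Let $D$ be a tangle diagram with topmost region $0$. For each segment $i$ set \[ \mathcal{F}(w_i)=s^+_{i^{\uparrow}}\,x_i^+\,(x_i^-)^{-1}\,(s^+_{i^{\uparrow}})^{-1}, \] an automorphism of the object $0$ in $\Pi(D)$, where $w_i$ is the Wirtinger generator associated with $i$. Then $\mathcal{F}$ is a well-defined group homomorphism (functor) from the Wirtinger group $\pi(D)$ to the automorphism group of the object $0$ in $\Pi(D)$.
   Context: Tangle diagrams: $D$ is an oriented tangle diagram in $[0,1]^2$, viewed as a 4-valent graph. Segments are the edges of the graph; a strand is cut at each crossing, over or under. Regions are the components of the complement of the graph in the square. The topmost region $0$ is the region containing the top side of the square. Arcs are the maximal chains of segments joined at crossings where they pass over. Above and below: for a segment $i$, $i^{\uparrow}$ is the region on the left of $i$ with respect to its orientation and $i^{\downarrow}$ the one on its right. Crossing labels: rotate a crossing so both strands point right. The incoming segments are $1$ (upper left) and $2$ (lower left). The outgoing segments are $1'$ (lower right, continuing $1$) and $2'$ (upper right, continuing $2$). The crossing is positive if strand $1\to1'$ is over, negative if strand $2\to2'$ is over. Wirtinger group $\pi(D)$: one generator per arc, with $w_i$ the generator of the arc containing segment $i$. The relations are $w_{2'}=w_1^{-1}w_2w_1$ at each positive crossing and $w_{1'}=w_2w_1w_2^{-1}$ at each negative crossing. Fundamental groupoid $\Pi(D)$: objects are regions. There are generators $x_i^+,x_i^-:i^{\uparrow}\to i^{\downarrow}$ for each segment $i$ (paths passing over, respectively under, the segment). Composition is written left to right ($fg$ means $f$ then $g$). At each crossing the relations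 are $x_1^+x_2^+=x_{2'}^+x_{1'}^+$ and $x_1^-x_2^-=x_{2'}^-x_{1'}^-$, together with $x_1^-x_2^+=x_{2'}^+x_{1'}^-$ (positive crossing) or $x_1^+x_2^-=x_{2'}^-x_{1'}^+$ (negative crossing). Over paths: for a region $j$, choose a sequence of adjacent regions from $0$ to $j$ crossing segments $i_1,\dots,i_k$, and set $s_j^+=(x_{i_1}^+)^{\epsilon_1}\cdots(x_{i_k}^+)^{\epsilon_k}$. Here $\epsilon_t=+1$ if segment $i_t$ is crossed from $i_t^{\uparrow}$ to $i_t^{\downarrow}$ and $-1$ otherwise. This morphism $0\to j$ is independent of the chosen sequence. *)

From mathcomp Require Import all_boot.
From Stdlib Require Import Relations.

Set Implicit Arguments.
Unset Strict Implicit.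
Unset Printing Implicit Defensive.

(*  dseg  : segments (edges of the 4-valent graph)                    *)
(*  dreg  : regions (components of the complement in the square)      *)
(*  dtop  : the topmost region 0                                      *)
(*  dup i = i^up (region on the left of i), ddown i = i^down (right)  *)
(*  din1 c, din2 c, dout1 c, dout2 c : segments 1, 2, 1', 2' at c     *)
(*     (labels after rotating c so that both strands point right)     *)
(*  dpos c : c is positive (strand 1 -> 1' is over)                   *)
Record diagram := Diagram {
  dseg : Type;
  dreg : Type;
  dcrs : Type;
  dtop : dreg;
  dup : dseg -> dreg;
  ddown : dseg -> dreg;
  din1 : dcrs -> dseg;
  din2 : dcrs -> dseg;
  dout1 : dcrs -> dseg;
  dout2 : dcrs -> dseg;
  dpos : dcrs -> bool }.

Section Diagram.
Variable D : diagram.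

(* Region incidence around a crossing forced by the labelling:
   regions T (above 1 and 2'), L (between 1 and 2), B (below 2, 1'),
   R (between 2' and 1'); 1: T->L, 2: L->B, 2': T->R, 1': R->B. *)
Definition crossing_incidence : Prop :=
  forall c : dcrs D,
    [/\ dup (din1 c) = dup (dout2 c), ddown (din1 c) = dup (din2 c),
        ddown (din2 c) = ddown (dout1 c) & ddown (dout2 c) = dup (dout1 c)].

(* letter (i, o, e): o = true for x_i^+ (over), false for x_i^- (under);
   e = true for the formal inverse of that generator.                  *)
Definition gletter := (dseg D * bool * bool)%type.

Definition gx (i : dseg D) (o : bool) : gletter := (i, o, false).
Definition gflip (l : gletter) : gletter := (l.1.1, l.1.2, ~~ l.2).

Definition gsrc (l : gletter) : dreg D :=
  if l.2 then ddown l.1.1 else dup l.1.1.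
Definition gtgt (l : gletter) : dreg D :=
  if l.2 then dup l.1.1 else ddown l.1.1.

(* w is a composable word (path) from a to b; composition left to right *)
Fixpoint is_gpath (a : dreg D) (w : seq gletter) (b : dreg D) : Prop :=
  match w with
  | [::] => a = b
  | l :: w' => gsrc l = a /\ is_gpath (gtgt l) w' b
  end.

Definition ginvword (w : seq gletter) : seq gletter := rev (map gflip w).

Inductive crossing_rel : seq gletter -> seq gletter -> Prop :=
| cr_over c :
    crossing_rel [:: gx (din1 c) true; gx (din2 c) true]
                 [:: gx (dout2 c) true; gx (dout1 c) true]
| cr_under c :
    crossing_rel [:: gx (din1 c) false; gx (din2 c) false]
                 [:: gx (dout2 c) false; gx (dout1 c) false]
| cr_pos c : dpos c = true ->
    crossing_rel [:: gx (din1 c) false; gx (din2 c) true]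
                 [:: gx (dout2 c) true; gx (dout1 c) false]
| cr_neg c : dpos c = false ->
    crossing_rel [:: gx (din1 c) true; gx (din2 c) false]
                 [:: gx (dout2 c) false; gx (dout1 c) true].

Inductive gstep : seq gletter -> seq gletter -> Prop :=
| gs_cancel u l v : gstep (u ++ l :: gflip l :: v) (u ++ v)
| gs_rel u r s v : crossing_rel r s -> gstep (u ++ r ++ v) (u ++ s ++ v).

(* equality of morphisms a -> b in Pi(D): the equivalence relation on
   paths a -> b generated by free cancellation and the relations. *)
Definition gstep_ab (a b : dreg D) (u v : seq gletter) : Prop :=
  [/\ gstep u v, is_gpath a u b & is_gpath a v b].

Definition gequiv (a b : dreg D) : relation (seq gletter) :=
  fun u v => [/\ is_gpath a u b, is_gpath a v b &
                 clos_refl_sym_trans _ (gstep_ab a b) u v].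

(* Over paths: sequences of adjacent regions from 0 to j crossing
   segments i_1..i_k, encoded as words in the (x_i^+)^{+-1}.          *)
Definition over_walk (j : dreg D) (w : seq gletter) : Prop :=
  all (fun l : gletter => l.1.2) w /\ is_gpath (dtop D) w j.

(* Arcs: maximal chains of segments joined at crossings where they pass
   over; i.e. the equivalence generated by 1 ~ 1' at positive and
   2 ~ 2' at negative crossings.                                      *)
Inductive over_next : dseg D -> dseg D -> Prop :=
| on_pos c : dpos c = true -> over_next (din1 c) (dout1 c)
| on_neg c : dpos c = false -> over_next (din2 c) (dout2 c).

Definition same_arc : relation (dseg D) := clos_refl_sym_trans _ over_next.

(* letter (i, e): w_i (generator of the arc containing i), inverted iff e *)
Definition wletter := (dseg D * bool)%type.

Inductive wirt_rel : seq wletter -> seq wletter -> Prop :=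
| wr_pos c : dpos c = true ->
    wirt_rel [:: (dout2 c, false)]
             [:: (din1 c, true); (din2 c, false); (din1 c, false)]
| wr_neg c : dpos c = false ->
    wirt_rel [:: (dout1 c, false)]
             [:: (din2 c, false); (din1 c, false); (din2 c, true)].

Inductive wstep : seq wletter -> seq wletter -> Prop :=
| ws_cancel u i e v : wstep (u ++ (i, e) :: (i, ~~ e) :: v) (u ++ v)
| ws_rel u r s v : wirt_rel r s -> wstep (u ++ r ++ v) (u ++ s ++ v)
| ws_arc u i j e v : same_arc i j -> wstep (u ++ (i, e) :: v) (u ++ (j, e) :: v).

Definition wequiv : relation (seq wletter) := clos_refl_sym_trans _ wstep.

(* Facts about genuine tangle diagrams that the paper uses: the crossing
   incidence, every region is reachable from 0, and the over path s_j^+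
   is independent of the chosen sequence of regions. *)
Definition tangle_diagram : Prop :=
  [/\ crossing_incidence,
      (forall j : dreg D, exists w, over_walk j w) &
      (forall (j : dreg D) w1 w2, over_walk j w1 -> over_walk j w2 ->
         gequiv (dtop D) j w1 w2)].

End Diagram.

(* The image of w_i is the loop (s x_i^+) (s x_i^-)^-1 at 0, where s is an over path to
   i^up: it crosses i once over and comes back once under.  It does not depend on s, since
   over paths are unique up to the relations, and a quotient (p r) (q r)^-1 reduces to
   p q^-1.  At a crossing, extend the over path s to the region above the crossing by
   [1 then 2] (left of the crossing) or by [2' then 1'] (right of it), passing over or
   under each segment: this gives eight paths to the region below.  The images of
   w_1, w_2, w_1', w_2' are quotients of two of them, the crossing relations identify
   left and right paths in pairs, and the arc and Wirtinger relations then reduce to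
   telescoping products (p q^-1) (q r^-1) = p r^-1. *)

From mathcomp Require Import all_boot.
From Stdlib Require Import Relations IndefiniteDescription.

Set Implicit Arguments.
Unset Strict Implicit.
Unset Printing Implicit Defensive.

Section Groupoid.
Variable D : diagram.
Implicit Types (a b c d : dreg D) (l : gletter D) (p q s t u v w : seq (gletter D)).

Lemma gflipK : involutive (@gflip D).
Proof. by case=> [[i o] []]. Qed.

Lemma gsrc_gflip l : gsrc (gflip l) = gtgt l.
Proof. by case: l => [[i o] []]. Qed.

Lemma gtgt_gflip l : gtgt (gflip l) = gsrc l.
Proof. by case: l => [[i o] []]. Qed.

Lemma ginvword_cat u v : ginvword (u ++ v) = ginvword v ++ ginvword u.
Proof. by rewrite /ginvword map_cat rev_cat. Qed.

Lemma ginvword_cons l u : ginvword (l :: u) = ginvword u ++ [:: gflip l].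
Proof. by rewrite /ginvword /= rev_cons cats1. Qed.

Lemma ginvwordK : involutive (@ginvword D).
Proof. by move=> u; rewrite /ginvword map_rev revK (mapK gflipK). Qed.

Lemma is_gpath_cat a b c u v :
  is_gpath a u b -> is_gpath b v c -> is_gpath a (u ++ v) c.
Proof.
elim: u a => [|l u IHu] a /=; first by move->.
by case=> src_l path_u path_v; split; last exact: IHu path_v.
Qed.

Lemma is_gpath_split a c u v :
  is_gpath a (u ++ v) c -> exists2 b, is_gpath a u b & is_gpath b v c.
Proof.
elim: u a => [|l u IHu] a /=; first by exists a.
by case=> src_l /IHu[b path_u path_v]; exists b.
Qed.

Lemma is_gpath_inv a b u : is_gpath a u b -> is_gpath b (ginvword u) a.
Proof.
elim: u a => [|l u IHu] a /=; first by move->.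
case=> src_l /IHu path_u; rewrite ginvword_cons.
by apply: is_gpath_cat path_u _; rewrite /= gsrc_gflip gtgt_gflip.
Qed.

Lemma gstep_ctx p q u v : gstep u v -> gstep (p ++ u ++ q) (p ++ v ++ q).
Proof.
case=> [u1 l v1 | u1 r s v1 rel_rs].
  by have := gs_cancel (p ++ u1) l (v1 ++ q); rewrite -!catA.
by have := gs_rel (p ++ u1) (v1 ++ q) rel_rs; rewrite -!catA.
Qed.

Lemma is_gpath_nil a : is_gpath a [::] a.
Proof. by []. Qed.

Lemma gequiv_refl a b u : is_gpath a u b -> gequiv a b u u.
Proof. by split; last exact: rst_refl. Qed.

Lemma gequiv_sym a b u v : gequiv a b u v -> gequiv a b v u.
Proof. by case=> path_u path_v uv; split; last exact: rst_sym. Qed.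

Lemma gequiv_trans a b u v w : gequiv a b u v -> gequiv a b v w -> gequiv a b u w.
Proof. by case=> path_u _ uv [_ path_w vw]; split; last exact: rst_trans uv vw. Qed.

Lemma gequiv_ctx a b c d p q u v : is_gpath c p a -> is_gpath b q d ->
  gequiv a b u v -> gequiv c d (p ++ u ++ q) (p ++ v ++ q).
Proof.
move=> path_p path_q [path_u path_v uv]; have ctx_path w :
  is_gpath a w b -> is_gpath c (p ++ w ++ q) d.
  by move=> path_w; apply: is_gpath_cat path_p (is_gpath_cat path_w path_q).
split; [exact: ctx_path | exact: ctx_path |].
elim: uv => [x y [xy path_x path_y] | x | x y _ IH | x y z _ IHxy _ IHyz].
- by apply: rst_step; split; [exact: gstep_ctx | exact: ctx_path | exact: ctx_path].
- exact: rst_refl.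
- exact: rst_sym.
- exact: rst_trans IHxy IHyz.
Qed.

Lemma gequiv_catl a b c p u v :
  is_gpath c p a -> gequiv a b u v -> gequiv c b (p ++ u) (p ++ v).
Proof. by move=> path_p /(gequiv_ctx path_p (is_gpath_nil b)); rewrite !cats0. Qed.

Lemma gequiv_catr a b d q u v :
  is_gpath b q d -> gequiv a b u v -> gequiv a d (u ++ q) (v ++ q).
Proof. exact: gequiv_ctx (is_gpath_nil a). Qed.

Lemma gequiv_cat a b c u u' v v' :
  gequiv a b u u' -> gequiv b c v v' -> gequiv a c (u ++ v) (u' ++ v').
Proof.
move=> uu' vv'; case: (uu') => _ path_u' _; case: (vv') => path_v _ _.
exact: gequiv_trans (gequiv_catr path_v uu') (gequiv_catl path_u' vv').
Qed.

Lemma gequiv_cancel_step a b p l q : is_gpath a (p ++ l :: gflip l :: q) b ->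
  gequiv a b (p ++ l :: gflip l :: q) (p ++ q).
Proof.
move=> path_plq; have [m path_p /= [src_l [_ path_q]]] := is_gpath_split path_plq.
rewrite gtgt_gflip src_l in path_q; have path_pq := is_gpath_cat path_p path_q.
by split=> //; apply: rst_step; split=> //; exact: gs_cancel.
Qed.

Lemma gequiv_cancel a b b' c p w q : is_gpath a p b -> is_gpath b w b' ->
  is_gpath b q c -> gequiv a c (p ++ w ++ ginvword w ++ q) (p ++ q).
Proof.
elim: w p b q => [|l w IHw] p b q path_p path_w path_q /=.
  exact: gequiv_refl (is_gpath_cat path_p path_q).
case: path_w => src_l path_w.
have path_pl : is_gpath a (p ++ [:: l]) (gtgt l) by apply: is_gpath_cat path_p _; split.
have path_lq : is_gpath (gtgt l) (gflip l :: q) c by rewrite /= gsrc_gflip gtgt_gflip src_l.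
have cancel_w := IHw _ _ _ path_pl path_w path_lq; rewrite -!catA /= in cancel_w.
rewrite ginvword_cons -!catA /=; apply: gequiv_trans cancel_w _.
by apply: gequiv_cancel_step; apply: (is_gpath_cat path_p); split.
Qed.

Lemma gequiv_inv a b u v : gequiv a b u v -> gequiv b a (ginvword u) (ginvword v).
Proof.
move=> uv; case: (uv) => path_u path_v _.
have path_iu := is_gpath_inv path_u; have path_iv := is_gpath_inv path_v.
have cancel_v : gequiv b a (ginvword u ++ v ++ ginvword v) (ginvword u).
  by have := gequiv_cancel path_iu path_v (is_gpath_nil a); rewrite !cats0.
have cancel_u : gequiv b a (ginvword u ++ u ++ ginvword v) (ginvword v).
  by have := gequiv_cancel (is_gpath_nil b) path_iu path_iv; rewrite ginvwordK.
apply: gequiv_trans (gequiv_sym cancel_v) (gequiv_trans _ cancel_u).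
exact: gequiv_ctx path_iu path_iv (gequiv_sym uv).
Qed.

Definition gdiv u v := u ++ ginvword v.

Lemma ginvword_gdiv u v : ginvword (gdiv u v) = gdiv v u.
Proof. by rewrite /gdiv ginvword_cat ginvwordK. Qed.

Lemma gdiv_path a b u v : is_gpath a u b -> is_gpath a v b -> is_gpath a (gdiv u v) a.
Proof. by move=> path_u /is_gpath_inv; apply: is_gpath_cat. Qed.

Lemma gequiv_gdiv a b u u' v v' :
  gequiv a b u u' -> gequiv a b v v' -> gequiv a a (gdiv u v) (gdiv u' v').
Proof. by move=> uu' /gequiv_inv; apply: gequiv_cat. Qed.

Lemma gequiv_gdivV a u u' v v' :
  gequiv a a (gdiv u v) (gdiv u' v') -> gequiv a a (gdiv v u) (gdiv v' u').
Proof. by move/gequiv_inv; rewrite !ginvword_gdiv. Qed.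

Lemma gdiv_catr a b c u v w : is_gpath a u b -> is_gpath a v b -> is_gpath b w c ->
  gequiv a a (gdiv (u ++ w) (v ++ w)) (gdiv u v).
Proof.
move=> path_u /is_gpath_inv path_v path_w.
by have := gequiv_cancel path_u path_w path_v; rewrite /gdiv ginvword_cat -catA.
Qed.

Lemma gdiv_mul a b u v w : is_gpath a u b -> is_gpath a v b -> is_gpath a w b ->
  gequiv a a (gdiv u v ++ gdiv v w) (gdiv u w).
Proof.
move=> path_u path_v /is_gpath_inv path_w.
have := gequiv_cancel path_u (is_gpath_inv path_v) path_w.
by rewrite ginvwordK /gdiv -catA.
Qed.

Lemma gdiv_mul3 a b u v w x :
  is_gpath a u b -> is_gpath a v b -> is_gpath a w b -> is_gpath a x b ->
  gequiv a a (gdiv u v ++ gdiv v w ++ gdiv w x) (gdiv u x).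
Proof.
move=> path_u path_v path_w path_x.
apply: gequiv_trans (gdiv_mul path_u path_v path_x).
exact: gequiv_catl (gdiv_path path_u path_v) (gdiv_mul path_v path_w path_x).
Qed.

Definition meridian s i := gdiv (s ++ [:: gx i true]) (s ++ [:: gx i false]).

Lemma meridianE s i :
  meridian s i = s ++ [:: (i, true, false); (i, false, true)] ++ ginvword s.
Proof. by rewrite /meridian /gdiv ginvword_cat -catA. Qed.

Lemma meridian_path a s i : is_gpath a s (dup i) -> is_gpath a (meridian s i) a.
Proof. by move=> path_s; apply: gdiv_path; apply: is_gpath_cat path_s _. Qed.

Lemma gequiv_meridian a s t i :
  gequiv a (dup i) s t -> gequiv a a (meridian s i) (meridian t i).
Proof.
move=> st; have step o : is_gpath (dup i) [:: gx i o] (ddown i) by [].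
by apply: gequiv_gdiv; exact: gequiv_catr (step _) st.
Qed.

Lemma meridian_extend a s i j (e : bool) : is_gpath a s (dup i) -> ddown i = dup j ->
  gequiv a a (meridian s i) (gdiv (s ++ [:: gx i true; gx j e]) (s ++ [:: gx i false; gx j e])).
Proof.
move=> path_s down_i; apply: gequiv_sym.
have step o : is_gpath a (s ++ [:: gx i o]) (dup j).
  by apply: is_gpath_cat path_s _; rewrite /= /gsrc /gtgt /= down_i.
have step_j : is_gpath (dup j) [:: gx j e] (ddown j) by [].
by have := gdiv_catr (step true) (step false) step_j; rewrite -!catA.
Qed.

Lemma over_walk_snoc s i :
  over_walk (dup i) s -> over_walk (ddown i) (s ++ [:: gx i true]).
Proof.
case=> over_s path_s; split; first by rewrite all_cat over_s.
exact: is_gpath_cat path_s _.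
Qed.

Hypothesis incidence : crossing_incidence D.

Lemma crossing_rel_path a b r s : crossing_rel r s -> is_gpath a r b -> is_gpath a s b.
Proof.
case=> [c|c|c _|c _]; have [E1 E2 E3 E4] := incidence c;
by rewrite /= /gsrc /gtgt /= => -[<- [_ <-]]; rewrite ?E1 ?E2 ?E3 ?E4.
Qed.

Lemma crossing_rel_gequiv a b r s : crossing_rel r s -> is_gpath a r b -> gequiv a b r s.
Proof.
move=> rel_rs path_r; have path_s := crossing_rel_path rel_rs path_r.
split=> //; apply: rst_step; split=> //.
by have := gs_rel [::] [::] rel_rs; rewrite !cats0.
Qed.

End Groupoid.

Section Functor.
Variable D : diagram.
Hypothesis incidence : crossing_incidence D.
Variable over_path : dreg D -> seq (gletter D).
Hypothesis over_pathP : forall j, over_walk j (over_path j).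
Hypothesis over_walk_unique : forall j w1 w2,
  over_walk j w1 -> over_walk j w2 -> gequiv (dtop D) j w1 w2.

Local Notation r0 := (dtop D).
Local Notation gequiv0 := (gequiv r0 r0).

Definition Fgen (i : dseg D) := meridian (over_path (dup i)) i.

Lemma Fgen_path i : is_gpath r0 (Fgen i) r0.
Proof. by apply: meridian_path; case: (over_pathP (dup i)). Qed.

Lemma Fgen_over_walk i s : over_walk (dup i) s -> gequiv0 (Fgen i) (meridian s i).
Proof. by move=> walk_s; apply: gequiv_meridian; exact: over_walk_unique. Qed.

Section Crossing.
Variable c : dcrs D.
Local Notation a1 := (din1 c).
Local Notation a2 := (din2 c).
Local Notation b1 := (dout1 c).
Local Notation b2 := (dout2 c).

Let top_eq : dup a1 = dup b2. Proof. by case: (incidence c). Qed.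
Let left_eq : ddown a1 = dup a2. Proof. by case: (incidence c). Qed.
Let bottom_eq : ddown a2 = ddown b1. Proof. by case: (incidence c). Qed.
Let right_eq : ddown b2 = dup b1. Proof. by case: (incidence c). Qed.

Let s := over_path (dup a1).

Let walk_s : over_walk (dup a1) s. Proof. exact: over_pathP. Qed.
Let walk_s_out : over_walk (dup b2) s. Proof. by rewrite -top_eq. Qed.
Let path_s : is_gpath r0 s (dup a1). Proof. by case: walk_s. Qed.

Let in_step e d : is_gpath (dup a1) [:: gx a1 e; gx a2 d] (ddown a2).
Proof. by rewrite /= /gsrc /gtgt /= left_eq. Qed.

Let out_step e d : is_gpath (dup a1) [:: gx b2 e; gx b1 d] (ddown a2).
Proof. by rewrite /= /gsrc /gtgt /= top_eq right_eq bottom_eq. Qed.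

Definition left_path e d := s ++ [:: gx a1 e; gx a2 d].
Definition right_path e d := s ++ [:: gx b2 e; gx b1 d].

Lemma left_path_path e d : is_gpath r0 (left_path e d) (ddown a2).
Proof. exact: is_gpath_cat path_s (in_step e d). Qed.

Lemma right_path_path e d : is_gpath r0 (right_path e d) (ddown a2).
Proof. exact: is_gpath_cat path_s (out_step e d). Qed.

Lemma gequiv_left_right e d e' d' :
  crossing_rel [:: gx a1 e; gx a2 d] [:: gx b2 e'; gx b1 d'] ->
  gequiv r0 (ddown a2) (left_path e d) (right_path e' d').
Proof.
move=> rel_c; apply: (gequiv_catl path_s).
exact: (crossing_rel_gequiv incidence rel_c (in_step e d)).
Qed.

Lemma Fgen_in1 d : gequiv0 (Fgen a1) (gdiv (left_path true d) (left_path false d)).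
Proof.
exact: gequiv_trans (Fgen_over_walk walk_s) (meridian_extend d path_s left_eq).
Qed.

Lemma Fgen_in2 : gequiv0 (Fgen a2) (gdiv (left_path true true) (left_path true false)).
Proof.
have walk_left := over_walk_snoc walk_s; rewrite left_eq in walk_left.
by have := Fgen_over_walk walk_left; rewrite /meridian -!catA.
Qed.

Lemma Fgen_out2 d : gequiv0 (Fgen b2) (gdiv (right_path true d) (right_path false d)).
Proof.
have [_ path_s_out] := walk_s_out.
exact: gequiv_trans (Fgen_over_walk walk_s_out) (meridian_extend d path_s_out right_eq).
Qed.

Lemma Fgen_out1 : gequiv0 (Fgen b1) (gdiv (right_path true true) (right_path true false)).
Proof.
have walk_right := over_walk_snoc walk_s_out; rewrite right_eq in walk_right.
by have := Fgen_over_walk walk_right; rewrite /meridian -!catA.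
Qed.

Let over := gequiv_left_right (cr_over c).
Let under := gequiv_left_right (cr_under c).

Lemma Fgen_over_next_pos : dpos c -> gequiv0 (Fgen a1) (Fgen b1).
Proof.
move=> pos_c; have pos := gequiv_left_right (cr_pos pos_c).
apply: gequiv_trans (Fgen_in1 true) (gequiv_trans _ (gequiv_sym Fgen_out1)).
exact: gequiv_gdiv over pos.
Qed.

Lemma Fgen_over_next_neg : dpos c = false -> gequiv0 (Fgen a2) (Fgen b2).
Proof.
move=> neg_c; have neg := gequiv_left_right (cr_neg neg_c).
apply: gequiv_trans Fgen_in2 (gequiv_trans _ (gequiv_sym (Fgen_out2 true))).
exact: gequiv_gdiv over neg.
Qed.

Lemma Fgen_wirt_pos : dpos c ->
  gequiv0 (Fgen b2) (ginvword (Fgen a1) ++ Fgen a2 ++ Fgen a1).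
Proof.
move=> pos_c; have pos := gequiv_left_right (cr_pos pos_c); have P := left_path_path.
have inv_a1 : gequiv0 (ginvword (Fgen a1)) (gdiv (left_path false true) (left_path true true)).
  by have := gequiv_inv (Fgen_in1 true); rewrite ginvword_gdiv.
apply: gequiv_trans (Fgen_out2 false) _; apply: gequiv_sym.
apply: gequiv_trans (gequiv_cat inv_a1 (gequiv_cat Fgen_in2 (Fgen_in1 false))) _.
apply: gequiv_trans (gdiv_mul3 (P _ _) (P _ _) (P _ _) (P _ _)) _.
exact: gequiv_gdiv pos under.
Qed.

Lemma Fgen_wirt_neg : dpos c = false ->
  gequiv0 (Fgen b1) (Fgen a2 ++ Fgen a1 ++ ginvword (Fgen a2)).
Proof.
move=> neg_c; have neg := gequiv_left_right (cr_neg neg_c); have P := right_path_path.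
have a2_right : gequiv0 (Fgen a2) (gdiv (right_path true true) (right_path false true)).
  exact: gequiv_trans Fgen_in2 (gequiv_gdiv over neg).
have a1_right : gequiv0 (Fgen a1) (gdiv (right_path false true) (right_path false false)).
  exact: gequiv_trans (Fgen_in1 false) (gequiv_gdiv neg under).
have inv_a2 : gequiv0 (ginvword (Fgen a2)) (gdiv (right_path false false) (right_path true false)).
  have := gequiv_inv a2_right; rewrite ginvword_gdiv => /gequiv_trans; apply.
  exact: gequiv_gdivV (gequiv_trans (gequiv_sym (Fgen_out2 true)) (Fgen_out2 false)).
apply: gequiv_trans Fgen_out1 _; apply: gequiv_sym.
apply: gequiv_trans (gequiv_cat a2_right (gequiv_cat a1_right inv_a2)) _.
exact: gdiv_mul3 (P _ _) (P _ _) (P _ _) (P _ _).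
Qed.

End Crossing.

Lemma over_next_Fgen i j : over_next i j -> gequiv0 (Fgen i) (Fgen j).
Proof. by case=> c; [exact: Fgen_over_next_pos | exact: Fgen_over_next_neg]. Qed.

Lemma same_arc_Fgen i j : same_arc i j -> gequiv0 (Fgen i) (Fgen j).
Proof.
elim=> [x y | x | x y _ | x y z _ IHxy _]; first exact: over_next_Fgen.
- exact: gequiv_refl (Fgen_path x).
- exact: gequiv_sym.
- exact: gequiv_trans IHxy.
Qed.

Definition Fletter (l : wletter D) :=
  if l.2 then ginvword (Fgen l.1) else Fgen l.1.

Definition Fword (u : seq (wletter D)) := flatten (map Fletter u).

Lemma Fword_cat u v : Fword (u ++ v) = Fword u ++ Fword v.
Proof. by rewrite /Fword map_cat flatten_cat. Qed.

Lemma Fword_cons l u : Fword (l :: u) = Fletter l ++ Fword u.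
Proof. by []. Qed.

Lemma Fletter_flip i e : Fletter (i, ~~ e) = ginvword (Fletter (i, e)).
Proof. by case: e; rewrite /Fletter /= ?ginvwordK. Qed.

Lemma Fletter_path l : is_gpath r0 (Fletter l) r0.
Proof. by case: l => i [] /=; [apply: is_gpath_inv |]; exact: Fgen_path. Qed.

Lemma Fword_path u : is_gpath r0 (Fword u) r0.
Proof. by elim: u => [|l u IHu] //=; exact: is_gpath_cat (Fletter_path l) IHu. Qed.

Lemma wirt_rel_Fword r s : wirt_rel r s -> gequiv0 (Fword r) (Fword s).
Proof.
by case=> c sign_c; rewrite /Fword /Fletter /= !cats0;
  [exact: Fgen_wirt_pos | exact: Fgen_wirt_neg].
Qed.

Lemma wstep_Fword u v : wstep u v -> gequiv0 (Fword u) (Fword v).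
Proof.
case=> [p i e q | p r s q rel_rs | p i j e q arc_ij]; rewrite !Fword_cat ?Fword_cons.
- rewrite Fletter_flip; apply: (gequiv_cancel (Fword_path p) (Fletter_path (i, e))).
  exact: Fword_path.
- exact: gequiv_ctx (Fword_path p) (Fword_path q) (wirt_rel_Fword rel_rs).
- apply: gequiv_ctx (Fword_path p) (Fword_path q) _.
  by case: e => /=; [apply: gequiv_inv |]; exact: same_arc_Fgen.
Qed.

Lemma wequiv_Fword u v : wequiv u v -> gequiv0 (Fword u) (Fword v).
Proof.
elim=> [x y | x | x y _ | x y z _ IHxy _]; first exact: wstep_Fword.
- exact: gequiv_refl (Fword_path x).
- exact: gequiv_sym.
- exact: gequiv_trans IHxy.
Qed.

End Functor.

Theorem theorem3p5 (D : diagram) (HD : tangle_diagram D) :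
  exists F : seq (wletter D) -> seq (gletter D),
    [/\ (* F takes values in Aut(0) *)
        (forall u, is_gpath (dtop D) (F u) (dtop D)),
        (* well defined on pi(D) *)
        (forall u v, wequiv u v -> gequiv (dtop D) (dtop D) (F u) (F v)),
        (* homomorphism (composition left to right) *)
        (forall u v, gequiv (dtop D) (dtop D) (F (u ++ v)) (F u ++ F v)) &
        (* value on the Wirtinger generator w_i *)
        (forall (i : dseg D) (s : seq (gletter D)),
            over_walk (dup i) s ->
            gequiv (dtop D) (dtop D) (F [:: (i, false)])
              (s ++ [:: (i, true, false); (i, false, true)] ++ ginvword s))].
Proof.
case: HD => incidence reach over_walk_unique.
have [over_path over_pathP] := functional_choice _ reach.
exists (Fword over_path); split.
- exact: Fword_path.
- exact: wequiv_Fword.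
- by move=> u v; rewrite Fword_cat; apply/gequiv_refl/is_gpath_cat; exact: Fword_path.
- move=> i s walk_s; rewrite /Fword /Fletter /= cats0 -meridianE.
  exact: Fgen_over_walk.
Qed.
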